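(* Let $(X,d,A)$ be a metric pair and let $p\in[1,\infty]$. Then the following are equivalent: (i) for every $\alpha,\beta\in\overline{D}_p(X,A)$ with $W_p(\alpha,\beta)<\infty$ there exists an optimal matching $\sigma\in\overline{D}(X\times X,A\times A)$ of $\alpha$ and $\beta$; (ii) $A$ is distance minimizing, i.e. for each $x\in X$ with $d(x,A)<\infty$ there exists $a\in A$ with $d(x,A)=d(x,a)$.
   Context: A metric on a set $X$ is a map $d:X\times X\to[0,\infty]$ with $d(x,x)=0$, $d(x,y)=d(y,x)$ and $d(x,z)\le d(x,y)+d(y,z)$; infinite distances are allowed and $d(x,y)=0$ need not imply $x=y$. A metric pair $(X,d,A)$ is a metric space $(X,d)$ together with a closed subset $A\subset X$. Write $d(x,A)=\inf_{a\in A}d(x,a)$ and, for $\delta\in(0,\infty]$, $A^\delta=\{x\in X: d(x,A)<\delta\}$. A (countable) persistence diagram $\alpha\in\overline{D}(X,A)$ is a function $\hat\alpha:X\setminus A\to\mathbb{Z}_{\ge0}$ with countable support, written as a formal sum $\hat\alpha=\sum_{i\in I}x_i$ ($I$ countable, $x_i\in X\setminus A$, repetitions allowed); equivalently, a countable formal sum of points of $X$ modulo formal sums of points of $A$. $0$ denotes the empty diagram, $|\alpha|=|I|$. Similarly $\overline{D}(X\times X,A\times A)$ consists of countable formal sums of points of $(X\times X)\setminus(A\times A)$. Given $\hat\alpha=\sum_{i\in I}x_i$ and $\hat\beta=\sum_{j\in J}y_j$, a matching of $\alpha$ and $\beta$ is an element $\sigma$ of the form $\hat\sigma=\sum_{k\in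 K}(x_k,y_{\varphi(k)})+\sum_{i\in I\setminus K}(x_i,z_i)+\sum_{j\in J\setminus\varphi(K)}(w_j,y_j)$ for some $K\subset I$, injection $\varphi:K\to J$, and points $z_i,w_j\in A$. Writing $\hat\sigma=\sum_{l\in L}(u_l,v_l)$, its $p$-cost is $\mathrm{Cost}_p(\sigma)=\|(d(u_l,v_l))_{l\in L}\|_p\in[0,\infty]$ (the $\ell^p$ norm, sup norm if $p=\infty$). The $p$-Wasserstein distance is $W_p(\alpha,\beta)=\inf_\sigma\mathrm{Cost}_p(\sigma)$ over all matchings; an optimal matching is one with $\mathrm{Cost}_p(\sigma)=W_p(\alpha,\beta)$. For $\alpha$ and $\delta\in(0,\infty]$, the $\delta$-upper part $u_\delta(\alpha)$ is the restriction of $\hat\alpha$ to $X\setminus A^\delta$ and the $\delta$-lower part $\ell_\delta(\alpha)$ is the restriction to $A^\delta\setminus A$. For $p\in[1,\infty)$, $\overline{D}_p(X,A)=\{\alpha\in\overline{D}(X,A): |u_\infty(\alpha)|<\infty,\ W_p(\ell_\infty(\alpha),0)<\infty\}$; and $\overline{D}_\infty(X,A)=\{\alpha: |u_\delta(\alpha)|<\infty\text{ for all }\delta>0\}$. *)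

From HB Require Import structures.
From mathcomp Require Import all_boot all_order all_algebra.
From mathcomp Require Import all_classical all_reals.
From mathcomp Require Import ereal esum exp.
Set Implicit Arguments. Unset Strict Implicit. Unset Printing Implicit Defensive.
Import Order.TTheory GRing.Theory Num.Theory.
Local Open Scope classical_set_scope.
Local Open Scope ring_scope.
Local Open Scope ereal_scope.

Section PersistenceDiagrams.
Variables (R : realType) (X : Type).

(* extended pseudometric: values in [0, +oo] *)
Definition is_metric (d : X -> X -> \bar R) : Prop :=
  [/\ forall x y, 0 <= d x y,
      forall x, d x x = 0,
      forall x y, d x y = d y x &
      forall x y z, d x z <= d x y + d y z].

(* d(x,A) = inf_{a in A} d(x,a)  (= +oo if A is empty) *)
Definition distA (d : X -> X -> \bar R) (A : set X) (x : X) : \bar R :=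
  ereal_inf [set d x a | a in A].

(* closed for the (extended pseudo)metric topology: closure A = {x | d(x,A) = 0} *)
Definition metric_closed (d : X -> X -> \bar R) (A : set X) : Prop :=
  forall x, distA d A x = 0 -> A x.

Definition metric_pair d A := is_metric d /\ metric_closed d A.

(* A countable persistence diagram, given as a formal sum sum_{i in I} x_i,
   with index set I a subset of nat (any countable index set), points
   x_i in X \ A, each point occurring finitely often (multiplicities in Z>=0). *)
Record diagram := Diagram { dI : set nat ; dpt : nat -> X }.

Definition is_diagram (A : set X) (al : diagram) : Prop :=
  (forall i, dI al i -> ~ A (dpt al i)) /\
  (forall y, finite_set [set i | dI al i /\ dpt al i = y]).

Variables (d : X -> X -> \bar R) (A : set X).

(* the empty diagram 0 (the point function is irrelevant) *)
Definition zero_like (al : diagram) : diagram := Diagram set0 (dpt al).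

Definition upper_part (delta : \bar R) (al : diagram) : diagram :=
  Diagram [set i | dI al i /\ delta <= distA d A (dpt al i)] (dpt al).

Definition lower_part (delta : \bar R) (al : diagram) : diagram :=
  Diagram [set i | dI al i /\ distA d A (dpt al i) < delta] (dpt al).

(* Data of a matching of al = sum_{i in I} x_i and be = sum_{j in J} y_j :
   K subset of I, injection phi : K -> J, points z_i (i in I \ K) and
   w_j (j in J \ phi(K)) of A. *)
Record matching := Matching {
  mK : set nat ; mphi : nat -> nat ; mz : nat -> X ; mw : nat -> X }.

Definition is_matching (al be : diagram) (m : matching) : Prop :=
  [/\ mK m `<=` dI al,
      (forall i j, mK m i -> mK m j -> mphi m i = mphi m j -> i = j),
      mphi m @` mK m `<=` dI be,
      (forall i, dI al i -> ~ mK m i -> A (mz m i)) &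
      (forall j, dI be j -> ~ (mphi m @` mK m) j -> A (mw m j))].

(* the index set L of the formal sum sigma = sum_{l in L} (u_l, v_l) *)
Definition mL (al be : diagram) (m : matching) : set (nat + nat + nat) :=
  [set l | match l with
           | inl (inl k) => mK m k
           | inl (inr i) => dI al i /\ ~ mK m i
           | inr j => dI be j /\ ~ (mphi m @` mK m) j
           end].

Definition mpair (al be : diagram) (m : matching) (l : nat + nat + nat) : X * X :=
  match l with
  | inl (inl k) => (dpt al k, dpt be (mphi m k))
  | inl (inr i) => (dpt al i, mz m i)
  | inr j => (mw m j, dpt be j)
  end.

Definition lpnorm {T : choiceType} (p : \bar R) (S : set T) (c : T -> \bar R)
    : \bar R :=
  match p with
  | r%:E => (\esum_(l in S) (c l `^ r)) `^ (r^-1)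
  | +oo => ereal_sup ([set 0] `|` (c @` S))
  | -oo => 0
  end.

Definition cost (p : \bar R) (al be : diagram) (m : matching) : \bar R :=
  lpnorm p (mL al be m) (fun l => d (mpair al be m l).1 (mpair al be m l).2).

Definition Wp (p : \bar R) (al be : diagram) : \bar R :=
  ereal_inf [set cost p al be m | m in is_matching al be].

Definition optimal_matching (p : \bar R) (al be : diagram) (m : matching) :=
  is_matching al be m /\ cost p al be m = Wp p al be.

Definition in_Dp (p : \bar R) (al : diagram) : Prop :=
  is_diagram A al /\
  match p with
  | +oo => forall delta : R, (0 < delta)%R ->
             finite_set (dI (upper_part delta%:E al))
  | _ => finite_set (dI (upper_part +oo al)) /\
         Wp p (lower_part +oo al) (zero_like (lower_part +oo al)) < +oo
  end.

Definition distance_minimizing : Prop :=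
  forall x, distA d A x < +oo -> exists2 a, A a & distA d A x = d x a.

End PersistenceDiagrams.

(* (i) => (ii): if d(x,A) < oo and x is not in A, an optimal matching of the
   one-point diagram x with the empty diagram sends x to a point a of A with
   d(x,a) = W_p = d(x,A).

   (ii) => (i): take matchings s_n of cost at most W_p + 1/(n+1).  Encoding the
   partial injection of s_n as a sequence of values in nat + {none}, a diagonal
   argument gives a subsequence along which every coordinate either stabilises
   or tends to infinity.  The stable coordinates define the limit matching; a
   point whose partner escapes to infinity is sent instead to a nearest point
   of A.  This costs at most a factor 1/t more, for any t < 1, because the
   distances to A of the escaping partners tend to 0 (membership in D_p), while
   the point itself is at positive distance from the closed set A.  Comparing
   each finite part of the limit matching with some s_n through an injection of
   indices bounds its cost by W_p. *)

From HB Require Import structures.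
From mathcomp Require Import all_boot all_order all_algebra.
From mathcomp Require Import all_classical all_reals.
From mathcomp Require Import ereal esum exp.
From mathcomp Require Import lra.
Set Implicit Arguments. Unset Strict Implicit. Unset Printing Implicit Defensive.
Import Order.TTheory GRing.Theory Num.Theory.
Local Open Scope classical_set_scope.
Local Open Scope ring_scope.
Local Open Scope ereal_scope.

Section lpnorm.
Variables (R : realType) (T : choiceType).
Implicit Types (p : \bar R) (S : set T) (c : T -> \bar R).

Lemma esum_le_subset S S' c :
  S `<=` S' -> \esum_(i in S) c i <= \esum_(i in S') c i.
Proof.
move=> SS'; apply: ereal_sup_le => _ [F [finF FS] <-].
by exists F => //; split => //; exact: subset_trans SS'.
Qed.

Lemma lpnorm_ge0 p S c : 0 <= lpnorm p S c.
Proof.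
case: p => [r| |] //=; first exact: poweR_ge0.
by apply: ereal_sup_ubound; left.
Qed.

Lemma lpnorm_set0 p c : 1 <= p -> lpnorm p set0 c = 0.
Proof.
case: p => [r| |] //= r1; last by rewrite image_set0 setU0 ereal_sup1.
have r0 : r != 0%R by rewrite gt_eqF // (lt_le_trans ltr01) -?lee_fin.
by rewrite esum_set0 poweR0r // invr_eq0.
Qed.

Lemma lpnorm_set1 p (l : T) c : 1 <= p -> 0 <= c l -> lpnorm p [set l] c = c l.
Proof.
case: p => [r| |] //= r1 cl0; last first.
  rewrite image_set1; apply/le_anti/andP; split.
    by apply: ge_ereal_sup => x [->|->].
  by apply: ereal_sup_ubound; right.
have r0 : r != 0%R by rewrite gt_eqF // (lt_le_trans ltr01) -?lee_fin.
by rewrite esum_set1 ?poweR_ge0 // -poweRrM mulfV // poweRe1.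
Qed.

Lemma eq_lpnorm p S c c' :
  (forall l, S l -> c l = c' l) -> lpnorm p S c = lpnorm p S c'.
Proof.
move=> cc'; case: p => [r| |] //=.
  by rewrite (eq_esum (b := fun l => c' l `^ r)) // => l /cc' ->.
by congr (ereal_sup (_ `|` _)); apply: eq_imagel => l /cc'.
Qed.

Lemma lpnormZ p S c (t : R) : 1 <= p -> (0 < t)%R -> (forall l, 0 <= c l) ->
  lpnorm p S (fun l => t%:E * c l) = t%:E * lpnorm p S c.
Proof.
move=> p1 t0 c0; have t0' : 0 <= t%:E by rewrite lee_fin ltW.
case: p p1 => [r| |] //= p1; last first.
  by rewrite -ereal_sup_pZl // image_setU image_set1 mule0 image_comp.
have r0 : r != 0%R by rewrite gt_eqF // (lt_le_trans ltr01) -?lee_fin.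
have scale_esum : \esum_(l in S) (t%:E * c l) `^ r =
    (t `^ r)%:E * \esum_(l in S) c l `^ r.
  rewrite /esum -ereal_sup_pZl ?powR_gt0 // image_comp /=.
  congr ereal_sup; apply: eq_imagel => F [finF _] /=.
  rewrite ge0_mule_fsumr; last by move=> l; exact: poweR_ge0.
  by apply: eq_fsbigr => l _; rewrite poweRM // poweR_EFin.
rewrite scale_esum poweRM ?lee_fin ?powR_ge0 ?esum_ge0 //;
  last by move=> l _; exact: poweR_ge0.
by rewrite -poweR_EFin -poweRrM mulfV // poweRe1.
Qed.

End lpnorm.

Section lpnorm_monotone.
Variables (R : realType) (T : choiceType) (p : \bar R).
Hypothesis p1 : 1 <= p.

Lemma lpnorm_le_inj (T' : choiceType) (F : set T) (S : set T') (psi : T -> T')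
    c (c' : T' -> \bar R) :
  set_inj F psi -> {homo psi : l / F l >-> S l} ->
  (forall l, 0 <= c l) -> (forall l, 0 <= c' l) ->
  (forall l, F l -> c l <= c' (psi l)) -> lpnorm p F c <= lpnorm p S c'.
Proof.
move=> psi_inj psiS c0 c'0 cc'; case: p p1 => [r| |] //= r1; last first.
  apply: ge_ereal_sup => _ [->|[l Fl <-]]; first by apply: ereal_sup_ubound; left.
  apply: le_trans (cc' _ Fl) _; apply: ereal_sup_ubound; right.
  by exists (psi l) => //; exact: psiS.
have r0 : (0 <= r)%R by rewrite (le_trans ler01) -?lee_fin.
have esum_pow_itv (U : choiceType) (B : set U) (f : U -> \bar R) :
    \esum_(i in B) f i `^ r \in `[0%R, +oo].
  by rewrite in_itv /= leey andbT esum_ge0 // => *; exact: poweR_ge0.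
apply: gt0_ler_poweR; rewrite ?invr_ge0 ?esum_pow_itv //.
apply: (@le_trans _ _ (\esum_(l in F) c' (psi l) `^ r)).
  apply: le_esum => l Fl; apply: gt0_ler_poweR; rewrite ?cc' //.
  - by rewrite in_itv /= leey andbT c0.
  - by rewrite in_itv /= leey andbT c'0.
rewrite -(esum_image F psi (fun l => c' l `^ r)) //.
by apply: esum_le_subset => _ [l Fl <-]; exact: psiS.
Qed.

Lemma lpnorm_ub (S : set T) c l : (forall l, 0 <= c l) -> S l -> c l <= lpnorm p S c.
Proof.
move=> c0 Sl; rewrite -(lpnorm_set1 p1 (c0 l)).
by apply: (@lpnorm_le_inj _ [set l] S id) => // _ ->.
Qed.

Lemma lpnorm_le_finite (S : set T) c y : (forall l, 0 <= c l) ->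
  (forall F, finite_set F -> F `<=` S -> lpnorm p F c <= y) -> lpnorm p S c <= y.
Proof.
move=> c0 Fy; case: p p1 Fy => [r| |] //= r1 Fy; last first.
  apply: ge_ereal_sup => _ [->|[l Sl <-]].
    by apply: le_trans (Fy _ (finite_set0 _) (sub0set _)); apply: ereal_sup_ubound; left.
  have lS : [set l] `<=` S by move=> _ ->.
  have := Fy _ (finite_set1 l) lS; rewrite image_set1.
  by apply: le_trans; apply: ereal_sup_ubound; right.
have r0 : (0 < r)%R by rewrite (lt_le_trans ltr01) -?lee_fin.
have y0 : 0 <= y.
  by apply: le_trans (Fy _ (finite_set0 _) (sub0set _)); exact: poweR_ge0.
have pow_itv (x : \bar R) : 0 <= x -> x \in `[0%R, +oo] by rewrite in_itv /= leey andbT.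
rewrite -[leRHS](@poweRe1 _ y) // -(mulfV (lt0r_neq0 r0)) poweRrM.
have esum_pow_ge0 (F : set T) : 0 <= \esum_(l in F) c l `^ r.
  by apply: esum_ge0 => *; exact: poweR_ge0.
apply: gt0_ler_poweR; rewrite ?invr_ge0 ?(ltW r0) ?pow_itv ?poweR_ge0 //.
apply: ge_ereal_sup => _ [F [finF FS] <-].
rewrite -esum_fset //; last by move=> *; exact: poweR_ge0.
rewrite -[leLHS]poweRe1 // -(mulVf (lt0r_neq0 r0)) poweRrM.
by apply: gt0_ler_poweR; rewrite ?(ltW r0) ?pow_itv ?poweR_ge0 ?Fy.
Qed.

End lpnorm_monotone.

(* [approx M v x]: x is M-close to v in the one-point compactification of
   option nat, where [None] stands for the point at infinity. *)
Definition approx (M : nat) (v : option (option nat)) (x : option nat) : Prop :=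
  if v is Some y then x = y else exists2 k, x = Some k & (M <= k)%N.

Section diagonal_extraction.
Variable g : nat -> nat -> option nat.

Definition unbounded (P : set nat) := forall N, exists2 n, (N <= n)%N & P n.

Definition cluster_value (P : set nat) (c : nat) : option (option nat) :=
  match pselect (exists v, unbounded (P `&` [set n | g n c = v])) with
  | left h => Some (sval (cid h))
  | right _ => None
  end.

Fixpoint nested (c : nat) : set nat :=
  if c is c'.+1 then
    if cluster_value (nested c') c' is Some v then nested c' `&` [set n | g n c' = v]
    else nested c'
  else setT.

Definition diag_limit (c : nat) := cluster_value (nested c) c.

Lemma nestedS c : nested c.+1 =
  if diag_limit c is Some v then nested c `&` [set n | g n c = v] else nested c.
Proof. by []. Qed.

Lemma unbounded_nested c : unbounded (nested c).
Proof.
elim: c => [|c IHc]; first by move=> N; exists N.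
rewrite nestedS /diag_limit /cluster_value; case: pselect => // h.
exact: (svalP (cid h)).
Qed.

Lemma nested_decr c c' : (c <= c')%N -> nested c' `<=` nested c.
Proof.
move=> /subnK <-; elim: (c' - c)%N => [|k IHk] // n.
by rewrite addSn nestedS; case: diag_limit => [v [/IHk]|/IHk].
Qed.

Lemma nested_limit_some c v : diag_limit c = Some v -> nested c.+1 `<=` [set n | g n c = v].
Proof. by move=> cv n; rewrite nestedS cv => -[]. Qed.

Lemma nested_limit_none c M : diag_limit c = None ->
  exists B, forall n, (B <= n)%N -> nested c n -> approx M None (g n c).
Proof.
rewrite /diag_limit /cluster_value; case: pselect => // unb _.
have avoid v : exists B, forall n, (B <= n)%N -> nested c n -> g n c <> v.
  apply: contrapT => nB; apply: unb; exists v => N.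
  apply: contrapT => nN; apply: nB; exists N => n Nn cn gnv; apply: nN.
  by exists n.
elim: M => [|M [B HB]].
  have [B HB] := avoid None; exists B => n Bn cn.
  by case E: (g n c) => [k|]; [exists k | have := HB n Bn cn E].
have [B' HB'] := avoid (Some M); exists (maxn B B') => n.
rewrite geq_max => /andP[Bn B'n] cn; have [k gk Mk] := HB n Bn cn.
exists k; rewrite // ltn_neqAle Mk andbT; apply/eqP => Mk'.
by apply: (HB' n B'n cn); rewrite gk Mk'.
Qed.

Lemma nested_approx c M :
  exists B, forall n, (B <= n)%N -> nested c.+1 n -> approx M (diag_limit c) (g n c).
Proof.
case E: (diag_limit c) => [v|]; first by exists 0%N => n _ /(nested_limit_some E).
have [B HB] := nested_limit_none M E; exists B => n Bn.
by rewrite nestedS E; exact: HB.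
Qed.

Lemma diag_limit_approx C N M :
  exists2 n, (N <= n)%N & forall c, (c <= C)%N -> approx M (diag_limit c) (g n c).
Proof.
have [B HB] : exists B, forall c n, (c <= C)%N -> (B <= n)%N -> nested C.+1 n ->
    approx M (diag_limit c) (g n c).
  elim: C => [|C [B HB]].
    have [B HB] := nested_approx 0 M; exists B => c n; rewrite leqn0 => /eqP ->.
    exact: HB.
  have [B' HB'] := nested_approx C.+1 M; exists (maxn B B') => c n.
  rewrite leq_eqVlt geq_max => /orP[/eqP -> /andP[_ B'n]|cC /andP[Bn _] nn].
    exact: HB'.
  by apply: HB => //; exact: nested_decr nn.
have [n Nn nn] := unbounded_nested C.+1 (maxn N B).
move: Nn; rewrite geq_max => /andP[Nn Bn].
by exists n => // c cC; exact: HB.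
Qed.

End diagonal_extraction.

Section metric.
Variables (R : realType) (X : Type) (d : X -> X -> \bar R) (A : set X).
Hypothesis hd : is_metric d.

Lemma metric_ge0 x y : 0 <= d x y. Proof. by case: hd. Qed.
Lemma metric_xx x : d x x = 0. Proof. by case: hd. Qed.
Lemma metric_sym x y : d x y = d y x. Proof. by case: hd. Qed.
Lemma metric_triangle x y z : d x z <= d x y + d y z. Proof. by case: hd. Qed.

Lemma distA_le x a : A a -> distA d A x <= d x a.
Proof. by move=> Aa; apply: ereal_inf_lbound; exists a. Qed.

Lemma distA_ge0 x : 0 <= distA d A x.
Proof. by apply: le_ereal_inf_tmp => _ [a _ <-]; exact: metric_ge0. Qed.

Lemma distA_triangle x y : distA d A x <= d x y + distA d A y.
Proof.
case Exy: (d x y) => [r| |]; last by have := metric_ge0 x y; rewrite Exy.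
  rewrite leNgt -lteBrDl // ; apply/negP => /ereal_inf_lt [_ [a Aa <-]].
  rewrite lteBrDl // -Exy => /(le_lt_trans (metric_triangle x y a)).
  by rewrite ltNge distA_le.
by rewrite addye ?leey // gt_eqF // (lt_le_trans _ (distA_ge0 y)) // ltNye.
Qed.

Lemma distA_gt0 x : metric_closed d A -> ~ A x -> 0 < distA d A x.
Proof.
move=> Acl Ax; rewrite lt_neqAle distA_ge0 andbT.
by apply/eqP => dx0; apply/Ax/Acl.
Qed.

Lemma distA_escape (t e : R) x y : (0 <= t)%R ->
  e%:E <= (1 - t)%:E * distA d A x -> distA d A y < e%:E -> t%:E * distA d A x <= d x y.
Proof.
move=> t0; have := distA_triangle x y.
have := distA_ge0 x; have := distA_ge0 y; have := metric_ge0 x y.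
case: (distA d A x) => [s| |] //; case: (distA d A y) => [q| |] //;
  case: (d x y) => [r| |] //; rewrite ?leey //.
by rewrite -!EFinM -EFinD !lee_fin lte_fin => *; lra.
Qed.

End metric.

Section small_diagrams.
Variables (R : realType) (X : Type) (d : X -> X -> \bar R) (A : set X) (p : \bar R).
Hypotheses (hd : is_metric d) (p1 : 1 <= p).

Lemma Wp_ge0 (al be : diagram X) : 0 <= Wp d A p al be.
Proof. by apply: le_ereal_inf_tmp => _ [m _ <-]; exact: lpnorm_ge0. Qed.

Lemma Wp_empty (al be : diagram X) : dI al = set0 -> dI be = set0 -> Wp d A p al be = 0.
Proof.
move=> al0 be0; apply/le_anti; rewrite Wp_ge0 andbT.
have mL0 (m : matching X) : mK m = set0 -> mL al be m = set0.
  by move=> K0; apply/seteqP; split => // -[[k|i]|j] /=; rewrite ?K0 ?al0 ?be0 => -[].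
apply: ereal_inf_lbound; exists (Matching set0 id (dpt al) (dpt be)).
  by split => //= [y [] | i | j]; rewrite ?al0 ?be0.
by rewrite /cost mL0 // lpnorm_set0.
Qed.

Variables (al be : diagram X).
Hypotheses (al_pt : dI al = [set 0%N]) (be0 : dI be = set0).

Lemma matching_point_empty m : is_matching A al be m ->
  A (mz m 0) /\ cost d p al be m = d (dpt al 0) (mz m 0).
Proof.
move=> [_ _ mKbe mzA _].
have K0 k : ~ mK m k by move=> Kk; have := mKbe (mphi m k); rewrite be0; apply; exists k.
have mL1 : mL al be m = [set inl (inr 0%N)].
  apply/seteqP; split => [[[k|i]|j]|] //=; rewrite ?al_pt ?be0.
  - by move/K0.
  - by case=> ->.
  - by case.
  - by move=> _ ->; split; [rewrite al_pt | exact: K0].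
split; first by apply: mzA; [rewrite al_pt | exact: K0].
by rewrite /cost mL1 lpnorm_set1 //; exact: metric_ge0.
Qed.

Lemma Wp_point_empty : Wp d A p al be = distA d A (dpt al 0).
Proof.
apply/le_anti/andP; split.
  apply: le_ereal_inf_tmp => _ [a Aa <-]; apply: ereal_inf_lbound.
  have ma : is_matching A al be (Matching set0 id (fun=> a) (fun=> a)).
    by split => //= y [].
  by exists (Matching set0 id (fun=> a) (fun=> a)) => //; rewrite (matching_point_empty ma).2.
apply: le_ereal_inf_tmp => _ [m mm <-]; have [Az ->] := matching_point_empty mm.
exact: distA_le.
Qed.

End small_diagrams.

Definition point_diagram (X : Type) (x : X) := Diagram [set 0%N] (fun=> x).

Section necessity.
Variables (R : realType) (X : Type) (d : X -> X -> \bar R) (A : set X) (p : \bar R).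
Hypotheses (hd : is_metric d) (p1 : 1 <= p).

Lemma in_Dp_zero_like (al : diagram X) : in_Dp d A p (zero_like al).
Proof.
have fin0 (P : set nat) : P `<=` set0 -> finite_set P.
  by move=> P0; apply: sub_finite_set P0 (finite_set0 _).
split; first by split=> [i []|y]; apply: fin0 => i [].
case: p p1 => [r| |] //= r1; last by move=> e _; apply: fin0 => i [].
split; first by apply: fin0 => i [].
by rewrite Wp_empty //; apply/seteqP; split=> i [].
Qed.

Lemma in_Dp_point x : ~ A x -> distA d A x < +oo -> in_Dp d A p (point_diagram x).
Proof.
move=> Ax dx_fin.
have fin1 (P : set nat) : P `<=` [set 0%N] -> finite_set P.
  by move=> P0; apply: sub_finite_set P0 (finite_set1 _).
split; first by split=> [i _ //|y]; apply: fin1 => i [].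
case: p p1 => [r| |] //= r1; last by move=> e _; apply: fin1 => i [].
split; first by apply: fin1 => i [].
by rewrite Wp_point_empty //=; apply/seteqP; split=> [i [] //|_ ->]; split.
Qed.

Lemma distance_minimizing_of_optimal :
  (forall al be : diagram X, in_Dp d A p al -> in_Dp d A p be ->
     Wp d A p al be < +oo -> exists m, optimal_matching d A p al be m) ->
  distance_minimizing d A.
Proof.
move=> opt x dx_fin; have [Ax|Ax] := pselect (A x).
  exists x => //; apply/le_anti; rewrite (metric_xx hd) (distA_ge0 A hd) andbT.
  by rewrite -(metric_xx hd x); exact: distA_le.
pose al := point_diagram x; pose be := zero_like al.
have W : Wp d A p al be = distA d A x by rewrite Wp_point_empty.
have [|m [mm mopt]] := opt al be (in_Dp_point Ax dx_fin) (in_Dp_zero_like al).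
  by rewrite W.
have [Az cm] := matching_point_empty hd p1 (erefl : dI al = _) (erefl : dI be = _) mm.
by exists (mz m 0) => //; rewrite -W -mopt cm.
Qed.

End necessity.

Lemma finite_set_bounded (T : choiceType) (F : set T) (f : T -> nat) :
  finite_set F -> exists M, forall l, F l -> (f l < M)%N.
Proof.
move=> /finite_fsetP [Y ->]; exists (\max_(l <- finmap.enum_fset Y) f l).+1 => l Yl.
by rewrite ltnS; apply: (@leq_bigmax_seq _ (finmap.enum_fset Y) xpredT f l).
Qed.

Lemma esum_infinite (R : realType) (T : choiceType) (S : set T) (f : T -> \bar R) (e : R) :
  (0 < e)%R -> infinite_set S -> (forall x, S x -> e%:E <= f x) -> \esum_(i in S) f i = +oo.
Proof.
move=> e0 infS fe.
have sum_ge n : exists2 F, fsets S F & (n%:R * e)%:E <= \sum_(i \in F) f i.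
  elim: n => [|n [F [finF FS] Fn]].
    by exists set0; rewrite ?mul0r ?fsbig_set0 //; exact: fsets_set0.
  have [y Sy Fy] : exists2 y, S y & ~ F y.
    apply: contrapT => SF; apply: infS; apply: sub_finite_set finF => y Sy.
    by apply: contrapT => Fy; apply: SF; exists y.
  have finyF : finite_set (y |` F) by rewrite finite_setU; split => //; exact: finite_set1.
  exists (y |` F); first by split => // z [->|/FS].
  rewrite fsbigU0 ?fsbig_set1 //; last by move=> z [-> /Fy].
  by rewrite -nat1r mulrDl mul1r EFinD leeD // fe.
have esum_S_ge0 : 0 <= \esum_(i in S) f i.
  by apply: esum_ge0 => x /fe; apply: le_trans; rewrite lee_fin ltW.
case E: (\esum_(i in S) f i) esum_S_ge0 => [s| |] // _.
have := esum_ge (sum_ge (Num.truncn (s / e)).+1); rewrite E lee_fin -ler_pdivlMr //.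
by rewrite leNgt truncnS_gt.
Qed.

Lemma finite_set_lb_gt0 (R : realType) (T : choiceType) (F : set T) (f : T -> \bar R) :
  finite_set F -> (forall l, F l -> 0 < f l) ->
  exists2 e : R, (0 < e)%R & forall l, F l -> e%:E <= f l.
Proof.
move=> /finite_fsetP [Y ->].
suff seq_lb (s : seq T) : (forall l, l \in s -> 0 < f l) ->
    exists2 e : R, (0 < e)%R & forall l, l \in s -> e%:E <= f l.
  exact: (seq_lb (finmap.enum_fset Y)).
elim: s => [|x s IHs] f0; first by exists 1%R.
have [|e e0 es] := IHs; first by move=> l ls; apply: f0; rewrite inE ls orbT.
have [ex ex0 exx] : exists2 ex : R, (0 < ex)%R & ex%:E <= f x.
  have := f0 x (mem_head x s); case: (f x) => [r| |] // r0; first by exists r.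
  by exists 1%R; rewrite ?leey.
exists (Order.min ex e); first by rewrite lt_min ex0 e0.
move=> l; rewrite inE => /orP[/eqP ->|ls]; rewrite EFin_min.
  by rewrite ge_min exx.
by rewrite ge_min es ?orbT.
Qed.

Section tails.
Variables (R : realType) (X : Type) (d : X -> X -> \bar R) (A : set X).
Hypothesis hd : is_metric d.

Lemma Wp_zero_like_far_finite (r e : R) (al : diagram X) : (1 <= r)%R -> (0 < e)%R ->
  Wp d A r%:E al (zero_like al) < +oo ->
  finite_set [set i | dI al i /\ e%:E <= distA d A (dpt al i)].
Proof.
set G := [set i | _ /\ _] => r1 e0 Wfin; apply: contrapT => infG.
have r0 : (0 < r)%R by apply: lt_le_trans r1.
have [_ [m [_ _ mKbe mzA _] <-]] := ereal_inf_lt Wfin; apply/negP; rewrite -leNgt.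
have K0 k : ~ mK m k by move=> Kk; apply: (mKbe (mphi m k)); exists k.
rewrite /cost /= (@eqy_poweR _ _ r^-1) ?invr_gt0 ?leey //; apply/eqP; rewrite eq_le leey /=.
have GL : (fun i => inl (inr i)) @` G `<=` mL al (zero_like al) m.
  by move=> _ [i [Ii _] <-]; split => //; exact: K0.
apply: le_trans (esum_le_subset _ GL); rewrite esum_image; last by move=> i j _ _ [].
rewrite (esum_infinite (e := e `^ r)) ?powR_gt0 // => i [Ii ei] /=.
rewrite -poweR_EFin; apply: gt0_ler_poweR;
  rewrite ?in_itv /= ?leey ?lee_fin ?(ltW r0) ?(ltW e0) ?metric_ge0 //.
by apply: le_trans ei _; apply: distA_le; apply: mzA => //; exact: K0.
Qed.

Lemma in_Dp_far_finite p (ga : diagram X) (e : R) : 1 <= p -> in_Dp d A p ga -> (0 < e)%R ->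
  finite_set [set i | dI ga i /\ e%:E <= distA d A (dpt ga i)].
Proof.
case: p => [r| |] //= p1 [_ ga_Dp] e0; last exact: ga_Dp.
have [upper_fin lower_W] := ga_Dp.
have lower_far := Wp_zero_like_far_finite (e := e) p1 e0 lower_W.
have := conj upper_fin lower_far; rewrite -finite_setU; apply: sub_finite_set.
move=> i [Ii ei]; have [dfin|] := pselect (distA d A (dpt ga i) < +oo); first by right.
by move/negP; rewrite -leNgt => dinf; left.
Qed.

Lemma in_Dp_tail p (ga : diagram X) (e : R) : 1 <= p -> in_Dp d A p ga -> (0 < e)%R ->
  exists M, forall i, dI ga i -> (M <= i)%N -> distA d A (dpt ga i) < e%:E.
Proof.
move=> p1 ga_Dp e0; have [M HM] := finite_set_bounded id (in_Dp_far_finite p1 ga_Dp e0).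
exists M => i Ii Mi; rewrite ltNge; apply/negP => ei.
by have := HM i (conj Ii ei); rewrite ltnNge Mi.
Qed.

End tails.

Section matching_code.
Variable X : Type.
Implicit Types m : matching X.

Definition fwd m i : option nat := if pselect (mK m i) then Some (mphi m i) else None.

Definition bwd m j : option nat :=
  if pselect ((mphi m @` mK m) j) is left h then Some (s2val (cid2 h)) else None.

(* Position 2i holds the partner of the point i of the first diagram,
   position 2j+1 the partner of the point j of the second one. *)
Definition mcode m c : option nat := if odd c then bwd m c./2 else fwd m c./2.

Lemma mcode_fwd m i : mcode m i.*2 = fwd m i.
Proof. by rewrite /mcode odd_double doubleK. Qed.

Lemma mcode_bwd m j : mcode m j.*2.+1 = bwd m j.
Proof. by rewrite /mcode /= odd_double /= uphalf_double. Qed.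

Lemma fwd_some m i k : fwd m i = Some k -> mK m i /\ mphi m i = k.
Proof. by rewrite /fwd; case: pselect => // Ki [<-]. Qed.

Lemma fwd_mK m i : mK m i -> fwd m i = Some (mphi m i).
Proof. by rewrite /fwd; case: pselect. Qed.

Lemma fwd_none m i : fwd m i = None -> ~ mK m i.
Proof. by rewrite /fwd; case: pselect. Qed.

Lemma bwd_some m j i : bwd m j = Some i -> mK m i /\ mphi m i = j.
Proof. by rewrite /bwd; case: pselect => // h [<-]; case: cid2. Qed.

Lemma bwd_none m j : bwd m j = None -> ~ (mphi m @` mK m) j.
Proof. by rewrite /bwd; case: pselect. Qed.

End matching_code.

(* The position of [mcode] that decides the index [l] of a matching. *)
Definition coord (l : nat + nat + nat) : nat :=
  match l with inl (inl k) => k.*2 | inl (inr i) => i.*2 | inr j => j.*2.+1 end.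

Section limit_matching.
Variables (R : realType) (X : Type) (d : X -> X -> \bar R) (A : set X) (p : \bar R).
Hypotheses (hd : is_metric d) (p1 : 1 <= p).
Variables (al be : diagram X) (ms : nat -> matching X) (lim : nat -> option (option nat)).
Hypothesis ms_matching : forall n, is_matching A al be (ms n).
Hypothesis lim_approx : forall C N M,
  exists2 n, (N <= n)%N & forall c, (c <= C)%N -> approx M (lim c) (mcode (ms n) c).

Local Notation a i := (distA d A (dpt al i)).
Local Notation b j := (distA d A (dpt be j)).

Definition limK : set nat := [set i | exists j, lim i.*2 = Some (Some j)].
Definition limphi i : nat := if lim i.*2 is Some (Some j) then j else 0%N.

Definition nearest_point (x : X) : X :=
  if pselect (exists2 a, A a & distA d A x = d x a) is left h then s2val (cid2 h) else x.

Definition limit_matching :=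
  Matching limK limphi (fun i => nearest_point (dpt al i)) (fun j => nearest_point (dpt be j)).

Local Notation limL := (mL al be limit_matching).

Definition pair_cost (m : matching X) (l : nat + nat + nat) : \bar R :=
  d (mpair al be m l).1 (mpair al be m l).2.

Definition limcost (l : nat + nat + nat) : \bar R :=
  match l with
  | inl (inl k) => d (dpt al k) (dpt be (limphi k))
  | inl (inr i) => a i
  | inr j => b j
  end.

Lemma limcost_ge0 l : 0 <= limcost l.
Proof. by case: l => [[k|i]|j]; [exact: metric_ge0 | exact: distA_ge0 ..]. Qed.

Lemma lim_fwd i j : lim i.*2 = Some (Some j) -> exists n, fwd (ms n) i = Some j.
Proof.
move=> ij; have [n _ Hn] := lim_approx i.*2 0 0.
by exists n; have := Hn _ (leqnn _); rewrite ij mcode_fwd.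
Qed.

Lemma lim_bwd i j : lim j.*2.+1 = Some (Some i) -> lim i.*2 = Some (Some j).
Proof.
move=> ji; have [n _ Hn] := lim_approx (maxn i.*2 j.*2.+1) 0 j.+1.
have := Hn _ (leq_maxr _ _); rewrite ji mcode_bwd => /bwd_some[Ki ij].
have := Hn _ (leq_maxl _ _); rewrite mcode_fwd (fwd_mK Ki) ij.
by case: (lim i.*2) => [v ->|[k [<-]]] //; rewrite ltnn.
Qed.

Section stage.
Variables (F : set (nat + nat + nat)) (t : R) (M n : nat).
Hypotheses (FL : F `<=` limL) (FM : forall l, F l -> (coord l < M)%N).
Hypotheses (t0 : (0 <= t)%R) (t1 : (t <= 1)%R).
Hypothesis agree : forall c, (c < M)%N -> approx M (lim c) (mcode (ms n) c).
Hypothesis far_al : forall i k, F (inl (inr i)) -> dI be k -> (M <= k)%N ->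
  t%:E * a i <= d (dpt al i) (dpt be k).
Hypothesis far_be : forall j i, F (inr j) -> dI al i -> (M <= i)%N ->
  t%:E * b j <= d (dpt al i) (dpt be j).

(* An index of the limit matching whose partner escaped to infinity is sent to
   the pair it forms in [ms n]. *)
Definition stage_index (l : nat + nat + nat) : nat + nat + nat :=
  match l with
  | inl (inl _) => l
  | inl (inr i) => if lim i.*2 is None then inl (inl i) else l
  | inr j => if lim j.*2.+1 is None then
               (if bwd (ms n) j is Some i then inl (inl i) else l) else l
  end.

Definition stage_index_inv (l : nat + nat + nat) : nat + nat + nat :=
  if l is inl (inl i) then
    if (i.*2 < M)%N then (if lim i.*2 is Some (Some _) then l else inl (inr i))
    else inr (mphi (ms n) i)
  else l.

Lemma stage_agree l : F l -> approx M (lim (coord l)) (mcode (ms n) (coord l)).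
Proof. by move=> Fl; apply: agree; exact: FM. Qed.

Lemma stage_indexK l : F l -> stage_index_inv (stage_index l) = l.
Proof.
move=> Fl; have := stage_agree Fl; have := FM Fl; have := FL Fl.
case: l Fl => [[k|i]|j] Fl /= Ll lM.
- by case: Ll => j ->; rewrite lM.
- by case E: (lim i.*2) => //= _; rewrite lM E.
- case: (lim j.*2.+1) => [v|] //; rewrite mcode_bwd => -[i bi Mi]; rewrite bi /=.
  have /negbTE -> : ~~ (i.*2 < M)%N by rewrite -leqNgt (leq_trans Mi) // -addnn leq_addr.
  by rewrite (bwd_some bi).2.
Qed.

Lemma stage_index_spec l : F l ->
  mL al be (ms n) (stage_index l) /\ t%:E * limcost l <= pair_cost (ms n) (stage_index l).
Proof.
move=> Fl; have [mKal _ mphibe mzA mwA] := ms_matching n.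
have t_shrink x : 0 <= x -> t%:E * x <= x by move=> x0; rewrite gee_pMl.
have := stage_agree Fl; have := FL Fl.
case: l Fl => [[k|i]|j] Fl /= Ll.
- case: Ll => j kj; rewrite kj mcode_fwd => /fwd_some[Kk kj'].
  by split=> //; rewrite /pair_cost /= /limphi kj -kj' t_shrink ?metric_ge0.
- case: Ll => Ii nK; case E: (lim i.*2) => [[j|]|]; rewrite /= mcode_fwd.
  + by exfalso; apply: nK; exists j.
  + move=> /fwd_none nKn; split => //; rewrite /pair_cost /=.
    by apply: le_trans (t_shrink _ (distA_ge0 _ hd _)) _; apply: distA_le; exact: mzA.
  + move=> [k /fwd_some[Ki ik] Mk]; split=> //; rewrite /pair_cost /= ik.
    by apply: far_al => //; apply: mphibe; exists i.
- case: Ll => Jj nJ; case E: (lim j.*2.+1) => [[i|]|]; rewrite /= mcode_bwd.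
  + by exfalso; apply: nJ; exists i; [exists j | rewrite /limphi]; rewrite (lim_bwd E).
  + move=> /bwd_none nJn; split => //; rewrite /pair_cost /= (metric_sym hd).
    by apply: le_trans (t_shrink _ (distA_ge0 _ hd _)) _; apply: distA_le; exact: mwA.
  + move=> [i bi Mi]; have [Ki ij] := bwd_some bi; rewrite bi; split => //.
    by rewrite /pair_cost /= ij; apply: far_be => //; exact: mKal.
Qed.

Lemma stage_dominated : lpnorm p F (fun l => t%:E * limcost l) <= cost d p al be (ms n).
Proof.
apply: (lpnorm_le_inj p1 (psi := stage_index)).
- move=> x y /set_mem Fx /set_mem Fy exy.
  by rewrite -(stage_indexK Fx) -(stage_indexK Fy) exy.
- by move=> l /stage_index_spec[].
- by move=> l; rewrite mule_ge0 ?lee_fin ?limcost_ge0.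
- by move=> l; exact: metric_ge0.
- by move=> l /stage_index_spec[].
Qed.

End stage.

Hypotheses (al_pos : forall i, dI al i -> 0 < a i) (be_pos : forall j, dI be j -> 0 < b j).
Hypothesis al_tail : forall e, (0 < e)%R ->
  exists M, forall i, dI al i -> (M <= i)%N -> a i < e%:E.
Hypothesis be_tail : forall e, (0 < e)%R ->
  exists M, forall j, dI be j -> (M <= j)%N -> b j < e%:E.

Lemma limcost_dominated F t N : finite_set F -> F `<=` limL -> (0 < t < 1)%R ->
  exists2 n, (N <= n)%N & lpnorm p F (fun l => t%:E * limcost l) <= cost d p al be (ms n).
Proof.
move=> finF FL /andP[t0 t1].
(* Points matched in the limit keep their partner; only the others need slack. *)
pose slack l := if l is inl (inl _) then +oo else (1 - t)%:E * limcost l.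
have [e e0 e_slack] : exists2 e : R, (0 < e)%R & forall l, F l -> e%:E <= slack l.
  apply: finite_set_lb_gt0 => // -[[k|i]|j] /FL //= [Ii _];
    rewrite mule_gt0 ?lte_fin ?subr_gt0 //; [exact: al_pos | exact: be_pos].
have [Ma HMa] := al_tail e0; have [Mb HMb] := be_tail e0.
have [Mc HMc] := finite_set_bounded coord finF.
pose M := maxn Mc (maxn Ma Mb).
have [Ma_M Mb_M Mc_M] : [/\ (Ma <= M)%N, (Mb <= M)%N & (Mc <= M)%N].
  by rewrite !leq_max !leqnn !orbT.
have [n Nn Hn] := lim_approx M N M.
exists n => //; apply: (@stage_dominated F t M n); rewrite ?(ltW t0) ?(ltW t1) //.
- by move=> l /HMc /leq_trans; apply.
- by move=> c /ltnW; exact: Hn.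
- move=> i k Fi Jk Mk; apply: distA_escape (e_slack _ Fi) _ => //; first exact: ltW.
  by apply: HMb => //; exact: leq_trans Mk.
- move=> j i Fj Ii Mi; rewrite (metric_sym hd).
  apply: distA_escape (e_slack _ Fj) _ => //; first exact: ltW.
  by apply: HMa => //; exact: leq_trans Mi.
Qed.

Variable w : R.
Hypothesis ms_cost : forall n, cost d p al be (ms n) <= (w + n.+1%:R^-1)%:E.

Lemma limcost_le : lpnorm p limL limcost <= w%:E.
Proof.
apply: (lpnorm_le_finite p1 limcost_ge0) => F finF FL.
apply/lee_mul01Pr; first exact: lpnorm_ge0.
move=> t t01; apply/lee_addgt0Pr => eps eps0.
have [n Nn Fn] := limcost_dominated (Num.truncn eps^-1) finF FL t01.
have t0 : (0 < t)%R by case/andP: t01.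
rewrite -lpnormZ //; last exact: limcost_ge0.
apply: le_trans Fn (le_trans (ms_cost n) _); rewrite -EFinD lee_fin lerD2l.
rewrite invf_ple ?posrE //; apply: ltW; apply: lt_le_trans (truncnS_gt _) _.
by rewrite ler_nat ltnS.
Qed.

Hypothesis hdm : distance_minimizing d A.

Lemma nearest_point_spec x :
  distA d A x < +oo -> A (nearest_point x) /\ distA d A x = d x (nearest_point x).
Proof.
by move=> /hdm ex; rewrite /nearest_point; case: pselect => // {}ex; case: cid2 => y /= Ay ->.
Qed.

Lemma limcost_lty l : limL l -> limcost l < +oo.
Proof.
move=> Ll; apply: le_lt_trans (lpnorm_ub p1 limcost_ge0 Ll) _.
by apply: le_lt_trans limcost_le _; rewrite ltry.
Qed.

Lemma limit_matching_is_matching : is_matching A al be limit_matching.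
Proof.
split.
- move=> i [j /lim_fwd [n /fwd_some [Ki _]]].
  by have [mKal _ _ _ _] := ms_matching n; exact: mKal.
- move=> i i' [j E] [j' E'] /=; rewrite /limphi E E' => jj'.
  have [n _ Hn] := lim_approx (maxn i.*2 i'.*2) 0 0.
  have := Hn _ (leq_maxl _ _); have := Hn _ (leq_maxr _ _).
  rewrite E E' /= !mcode_fwd => /fwd_some[Ki' ij'] /fwd_some[Ki ij].
  by have [_ inj _ _ _] := ms_matching n; apply: inj; rewrite // ij ij' jj'.
- move=> _ [i [j E] <-]; rewrite /= /limphi E; have [n /fwd_some [Ki <-]] := lim_fwd E.
  by have [_ _ mphibe _ _] := ms_matching n; apply: mphibe; exists i.
- move=> i Ii nK.
  by have /limcost_lty/nearest_point_spec[] : limL (inl (inr i)) by split.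
- move=> j Jj nJ.
  by have /limcost_lty/nearest_point_spec[] : limL (inr j) by split.
Qed.

Lemma cost_limit_matching : cost d p al be limit_matching = lpnorm p limL limcost.
Proof.
apply: eq_lpnorm => -[[k|i]|j] Ll //=.
- by rewrite -(nearest_point_spec (limcost_lty Ll)).2.
- by rewrite (metric_sym hd) -(nearest_point_spec (limcost_lty Ll)).2.
Qed.

Lemma limit_matching_optimal :
  Wp d A p al be = w%:E -> optimal_matching d A p al be limit_matching.
Proof.
move=> Ww; split; first exact: limit_matching_is_matching.
apply/le_anti/andP; split; first by rewrite cost_limit_matching Ww limcost_le.
by apply: ereal_inf_lbound; exists limit_matching => //; exact: limit_matching_is_matching.
Qed.

End limit_matching.

Lemma Wp_minimizing_sequence (R : realType) (X : Type) (d : X -> X -> \bar R) (A : set X)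
    (p : \bar R) (al be : diagram X) (w : R) :
  Wp d A p al be = w%:E -> exists ms : nat -> matching X, forall n,
    is_matching A al be (ms n) /\ cost d p al be (ms n) <= (w + n.+1%:R^-1)%:E.
Proof.
move=> Ww; suff /choice[ms ms_min] : forall n : nat, exists m,
    is_matching A al be m /\ cost d p al be m <= (w + n.+1%:R^-1)%:E.
  by exists ms.
move=> n; have : Wp d A p al be < (w + n.+1%:R^-1)%:E.
  by rewrite Ww lte_fin ltrDl invr_gt0 ltr0Sn.
by move=> /ereal_inf_lt [_ [m mm <-] cm]; exists m; split => //; exact: ltW.
Qed.

Lemma optimal_matching_exists (R : realType) (X : Type) (d : X -> X -> \bar R) (A : set X)
    (p : \bar R) (al be : diagram X) :
  metric_pair d A -> 1 <= p -> distance_minimizing d A ->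
  in_Dp d A p al -> in_Dp d A p be -> Wp d A p al be < +oo ->
  exists m, optimal_matching d A p al be m.
Proof.
move=> [hd Acl] p1 hdm al_Dp be_Dp Wfin.
have WE : Wp d A p al be = (fine (Wp d A p al be))%:E.
  by rewrite fineK // ge0_fin_numE // Wp_ge0.
have [ms ms_min] := Wp_minimizing_sequence WE.
pose lim := diag_limit (fun n => mcode (ms n)).
exists (limit_matching d A al be lim).
apply: (limit_matching_optimal hd p1 (ms := ms) (lim := lim) _ _ _ _ _ _ _ hdm WE).
- by move=> n; exact: (ms_min n).1.
- exact: diag_limit_approx.
- by move=> i Ii; apply: (distA_gt0 hd Acl); exact: al_Dp.1.1 Ii.
- by move=> j Jj; apply: (distA_gt0 hd Acl); exact: be_Dp.1.1 Jj.
- by move=> e; exact: in_Dp_tail p1 al_Dp.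
- by move=> e; exact: in_Dp_tail p1 be_Dp.
- by move=> n; exact: (ms_min n).2.
Qed.

Theorem theorem4p8 (R : realType) (X : Type) (d : X -> X -> \bar R) (A : set X)
    (p : \bar R) :
  metric_pair d A -> 1 <= p ->
  ((forall al be : diagram X,
      in_Dp d A p al -> in_Dp d A p be -> Wp d A p al be < +oo ->
      exists m : matching X, optimal_matching d A p al be m)
   <-> distance_minimizing d A).
Proof.
move=> dA p1; split; first exact: distance_minimizing_of_optimal (proj1 dA) p1.
by move=> hdm al be; exact: optimal_matching_exists.
Qed.
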